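(* Let $\mathcal{F}$ be the class of endogenous subgroups models with $k$ components whose component densities belong to an exponential family $\{h(x)\exp(\langle\theta,T(x)\rangle-A(\theta)):\theta\in\Theta\}$. Then $\mathcal{H}=\{x\mapsto\frac{f(1\mid x)}{f(j\mid x)}: j\in[k], f\in\mathcal{F}\}$ satisfies ${\mathrm{Pdim}}(\mathcal{H})\le\dim(T(x))+1$.
   Context: An endogenous subgroups model $f$ with $k$ components has mixing weights $w_1,\dots,w_k$ and component densities $f(x\mid g)$; $f(g\mid x)=\frac{w_gf(x\mid g)}{\sum_{j\in[k]}w_jf(x\mid j)}$. $T(x)$ is the sufficient statistic of the exponential family. ${\mathrm{Pdim}}$ of a real-valued class is the VC dimension of the class of thresholded functions $x\mapsto\mathrm{sgn}(h(x)-r)$, $r\in\mathbb{R}$. *)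

From HB Require Import structures.
From mathcomp Require Import all_boot all_order all_algebra.
From mathcomp Require Import all_classical all_reals.
From mathcomp Require Import all_analysis.
Set Implicit Arguments. Unset Strict Implicit. Unset Printing Implicit Defensive.
Import Order.TTheory GRing.Theory Num.Theory.
Local Open Scope ring_scope.
Local Open Scope classical_set_scope.

Section Defs.
Variables (R : realType) (X : Type) (d : nat).

Definition inner (th t : 'rV[R]_d) : R := \sum_(i < d) th 0 i * t 0 i.

Definition expfam_density (h : X -> R) (T : X -> 'rV[R]_d) (A : 'rV[R]_d -> R)
  (th : 'rV[R]_d) (x : X) : R := h x * expR (inner th (T x) - A th).

(* An endogenous subgroups model with k components: mixing weights w and
   component parameters th; components densities f(x|g) = expfam_density (th g). *)
Definition is_esm (k : nat) (Theta : set 'rV[R]_d)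
  (w : 'I_k -> R) (th : 'I_k -> 'rV[R]_d) : Prop :=
  (forall g, 0 < w g) /\ \sum_(g < k) w g = 1 /\ (forall g, Theta (th g)).

Definition posterior (h : X -> R) (T : X -> 'rV[R]_d) (A : 'rV[R]_d -> R)
  (k : nat) (w : 'I_k -> R) (th : 'I_k -> 'rV[R]_d) (g : 'I_k) (x : X) : R :=
  w g * expfam_density h T A (th g) x /
    \sum_(j < k) w j * expfam_density h T A (th j) x.

(* H = { x |-> f(1|x) / f(j|x) : j in [k], f in F }; component "1" is the
   first index (ordinal 0) of 'I_k. *)
Definition ratio_class (h : X -> R) (T : X -> 'rV[R]_d) (A : 'rV[R]_d -> R)
  (Theta : set 'rV[R]_d) (k : nat) (hk : (0 < k)%N) : set (X -> R) :=
  [set F | exists (w : 'I_k -> R) (th : 'I_k -> 'rV[R]_d) (j : 'I_k),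
     is_esm Theta w th /\
     F = (fun x => posterior h T A w th (Ordinal hk) x / posterior h T A w th j x)].

End Defs.

Section Pdim.
Variables (R : realType) (X : Type).

(* thresholded class { x |-> sgn(h(x) - r) : h in H, r in R },
   with sgn(t) = + iff t >= 0, encoded as a boolean *)
Definition thresholded (H : set (X -> R)) : set (X -> bool) :=
  [set g | exists F r, H F /\ g = (fun x => r <= F x)].

Definition shatters (G : set (X -> bool)) (n : nat) (pts : 'I_n -> X) : Prop :=
  injective pts /\
  forall b : 'I_n -> bool, exists g, G g /\ forall i, g (pts i) = b i.

Definition VCdim_le (G : set (X -> bool)) (m : nat) : Prop :=
  forall n (pts : 'I_n -> X), shatters G pts -> (n <= m)%N.

Definition Pdim_le (H : set (X -> R)) (m : nat) : Prop :=
  VCdim_le (thresholded H) m.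
End Pdim.

(* The ratio f(1|x)/f(j|x) is C * exp(<u, T x>) with C > 0: the normalizing
   sums of the two posteriors and the base measure h(x) cancel.  Hence every
   thresholded ratio x |-> [r <= F x] is the indicator of a halfspace
   {x | be <= <v, T x>} in the feature space, and halfspaces in R^d shatter at
   most d + 1 points: among more points there is an affine dependence
   sum_i c_i T(x_i) = 0, sum_i c_i = 0, c <> 0, and no halfspace realizes the
   labelling [c_i <= 0], since then sum_i c_i (<v, T x_i> - be) = 0 is a sum of
   nonpositive terms that is negative unless c <= 0. *)

From HB Require Import structures.
From mathcomp Require Import all_boot all_order all_algebra.
From mathcomp Require Import all_classical all_reals.
From mathcomp Require Import all_analysis.
From mathcomp Require Import ring.
Set Implicit Arguments. Unset Strict Implicit. Unset Printing Implicit Defensive.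
Import Order.TTheory GRing.Theory Num.Theory.
Local Open Scope ring_scope.
Local Open Scope classical_set_scope.

Lemma nonzero_left_kernel (F : fieldType) m n (M : 'M[F]_(m, n)) :
  (n < m)%N -> exists2 c : 'rV[F]_m, c != 0 & c *m M = 0.
Proof.
move=> lt_nm; exists (nz_row (kermx M)); last exact/sub_kermxP/nz_row_sub.
by rewrite nz_row_eq0 kermx_eq0 /row_free neq_ltn (leq_ltn_trans (rank_leq_col M)).
Qed.

Lemma affinely_dependent (F : fieldType) n d (t : 'I_n -> 'rV[F]_d) :
  (d.+1 < n)%N ->
  exists c : 'rV[F]_n,
    [/\ c != 0, \sum_i c 0 i = 0 & \sum_i c 0 i *: t i = 0].
Proof.
move=> lt_dn; pose L := \matrix_(i < n) t i.
have lt_d1n : (d + 1 < n)%N by rewrite addn1.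
have [c c_neq0] := nonzero_left_kernel (row_mx L (const_mx 1 : 'cV_n)) lt_d1n.
rewrite mul_mx_row => /eqP; rewrite row_mx_eq0 => /andP[/eqP cL /eqP c1].
exists c; split=> //.
  transitivity ((c *m (const_mx 1 : 'cV_n)) 0 0); last by rewrite c1 mxE.
  by rewrite mxE; apply: eq_bigr => i _; rewrite mxE mulr1.
by rewrite -[RHS]cL mulmx_sum_row; apply: eq_bigr => i _; rewrite rowK.
Qed.

Section Inner.
Variables (R : realType) (d : nat).

Lemma inner0l (t : 'rV[R]_d) : inner 0 t = 0.
Proof. by rewrite /inner big1 // => i _; rewrite mxE mul0r. Qed.

Lemma inner0r (v : 'rV[R]_d) : inner v 0 = 0.
Proof. by rewrite /inner big1 // => i _; rewrite mxE mulr0. Qed.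

Lemma innerBl (a b t : 'rV[R]_d) : inner (a - b) t = inner a t - inner b t.
Proof. by rewrite /inner -sumrB; apply: eq_bigr => i _; rewrite !mxE mulrBl. Qed.

Lemma inner_sumr n (v : 'rV[R]_d) (c : 'I_n -> R) (t : 'I_n -> 'rV[R]_d) :
  inner v (\sum_i c i *: t i) = \sum_i c i * inner v (t i).
Proof.
rewrite /inner; under eq_bigr do rewrite summxE big_distrr.
rewrite exchange_big; apply: eq_bigr => i _; rewrite big_distrr.
by apply: eq_bigr => j _; rewrite !mxE; exact: mulrCA.
Qed.

End Inner.

Lemma halfspace_sign_dependence_eq0 (R : realType) n d
    (t : 'I_n -> 'rV[R]_d) (c : 'rV[R]_n) (v : 'rV[R]_d) (be : R) :
  \sum_i c 0 i = 0 -> \sum_i c 0 i *: t i = 0 ->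
  (forall i, (be <= inner v (t i)) = (c 0 i <= 0)) -> c = 0.
Proof.
move=> sum_c sum_ct sign.
pose phi i := inner v (t i) - be.
have term_ge0 i : 0 <= - (c 0 i * phi i).
  rewrite oppr_ge0 /phi; have := sign i; case: (lerP (c 0 i) 0) => ci si.
    by rewrite mulr_le0_ge0 // subr_ge0 si.
  by rewrite pmulr_rle0 // subr_le0 ltW // ltNge si.
have sum_terms : \sum_i - (c 0 i * phi i) = 0.
  rewrite sumrN /phi; under eq_bigr do rewrite mulrBr.
  by rewrite sumrB -inner_sumr sum_ct inner0r -mulr_suml sum_c mul0r subrr oppr0.
have c_le0 i : c 0 i <= 0.
  rewrite leNgt; apply/negP => ci.
  have /eqP := @psumr_eq0P _ _ predT _ (fun i _ => term_ge0 i) sum_terms i isT.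
  rewrite oppr_eq0 mulf_eq0 gt_eqF //= subr_eq0 => /eqP phi0.
  by have := sign i; rewrite phi0 lexx leNgt ci.
apply/rowP => i; rewrite mxE; apply/eqP; rewrite -oppr_eq0; apply/eqP.
apply: (psumr_eq0P (P := predT) (F := fun i => - c 0 i)) => //.
  by move=> j _; rewrite oppr_ge0.
by rewrite sumrN sum_c oppr0.
Qed.

Lemma halfspace_shatter_le (R : realType) n d (t : 'I_n -> 'rV[R]_d) :
  (forall b : 'I_n -> bool,
     exists v be, forall i, (be <= inner v (t i)) = b i) ->
  (n <= d.+1)%N.
Proof.
move=> shattered; rewrite leqNgt; apply/negP => /(affinely_dependent t).
move=> [c [c_neq0 sum_c sum_ct]].
have [v [be sign]] := shattered (fun i => c 0 i <= 0).
by move/eqP: c_neq0; apply; exact: halfspace_sign_dependence_eq0 sign.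
Qed.

Lemma expR_threshold_halfspace (R : realType) d (r C : R) (u : 'rV[R]_d) :
  0 < C -> exists v be, forall t, (r <= C * expR (inner u t)) = (be <= inner v t).
Proof.
move=> C_gt0; case: (lerP r 0) => r0.
  exists 0, 0 => t; rewrite inner0l lexx.
  by apply: le_trans r0 _; rewrite ltW // mulr_gt0 // expR_gt0.
exists u, (ln (r / C)) => t.
rewrite -[RHS]ler_expR lnK ?posrE ?divr_gt0 //.
by rewrite ler_pdivrMr // mulrC.
Qed.

Section Posterior.
Variables (R : realType) (X : Type) (d : nat).
Variables (h : X -> R) (T : X -> 'rV[R]_d) (A : 'rV[R]_d -> R).

Lemma expfam_density_ratio (th th' : 'rV[R]_d) (x : X) : h x != 0 ->
  expfam_density h T A th x / expfam_density h T A th' x =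
  expR (A th' - A th) * expR (inner (th - th') (T x)).
Proof.
move=> hx_neq0; rewrite /expfam_density invfM mulrACA mulfV // mul1r.
by rewrite -expRB -expRD innerBl; congr expR; ring.
Qed.

Lemma posterior_ratio k (w : 'I_k -> R) (th : 'I_k -> 'rV[R]_d) g j x :
  \sum_(i < k) w i * expfam_density h T A (th i) x != 0 ->
  posterior h T A w th g x / posterior h T A w th j x =
  w g * expfam_density h T A (th g) x / (w j * expfam_density h T A (th j) x).
Proof. by move=> sum_neq0; rewrite /posterior invf_div mulrA divfK. Qed.

Lemma ratio_class_expR_inner (Theta : set 'rV[R]_d) k (hk : (0 < k)%N) F :
  (forall x, 0 < h x) -> ratio_class h T A Theta hk F ->
  exists C u, 0 < C /\ F = fun x => C * expR (inner u (T x)).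
Proof.
move=> h_gt0 [w [th [j [[w_gt0 _] ->]]]]; set o := Ordinal hk.
exists (w o / w j * expR (A (th j) - A (th o))), (th o - th j).
split; first by rewrite mulr_gt0 ?expR_gt0 ?divr_gt0.
apply/funext => x.
have dens_gt0 i : 0 < w i * expfam_density h T A (th i) x.
  by rewrite !mulr_gt0 ?expR_gt0.
rewrite posterior_ratio; last first.
  rewrite gt_eqF // (bigD1 o) //= ltr_pwDl //.
  by apply: sumr_ge0 => i _; exact: ltW.
by rewrite invfM mulrACA expfam_density_ratio ?gt_eqF // mulrA.
Qed.

End Posterior.

Theorem lemma3 (R : realType) (X : Type) (d : nat)
  (h : X -> R) (T : X -> 'rV[R]_d) (A : 'rV[R]_d -> R) (Theta : set 'rV[R]_d)
  (hpos : forall x, 0 < h x)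
  (k : nat) (hk : (0 < k)%N) :
  Pdim_le (ratio_class h T A Theta hk) d.+1.
Proof.
move=> n pts [_ shattered]; apply: (@halfspace_shatter_le R n d (T \o pts)) => b.
have [_ [[F [r [F_ratio ->]]] realizes_b]] := shattered b.
have [C [u [C_gt0 FE]]] := ratio_class_expR_inner hpos F_ratio.
have [v [be threshold]] := expR_threshold_halfspace r u C_gt0.
by exists v, be => i; rewrite -realizes_b FE threshold.
Qed.
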